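(* Suppose that $\mathbb{U}$ sends $\mathcal{H}_\mathcal{X}^-$ to $\mathcal{H}_Y^-$, so that $\mathbb{U} = U_0 + U_1 z^{-1} + \cdots + U_k z^{-k}$ for some non-negative integer $k$ and some linear maps $U_i: H^\bullet_{\mathrm{CR}}(\mathcal{X};\mathbb{C}) \to H^\bullet(Y;\mathbb{C})$. Then: (i) $U_0$ is grading-preserving; (ii) $U_0$ maps $\mathbf{1}_\mathcal{X}$ to $\mathbf{1}_Y$; (iii) $U_0$ maps $\rho \in H^2(\mathcal{X};\mathbb{C})$ to $\pi^\star\rho \in H^2(Y;\mathbb{C})$; (iv) $U_0$ identifies the orbifold Poincaré pairing on $H^\bullet_{\mathrm{CR}}(\mathcal{X};\mathbb{C})$ with the Poincaré pairing on $H^\bullet(Y;\mathbb{C})$.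
   Context: Let $\mathcal{X}$ be a Gorenstein orbifold (smooth Deligne–Mumford stack over $\mathbb{C}$) with projective coarse moduli space $X$ and trivial generic isotropy, and let $\pi: Y \to X$ be a crepant resolution. $H^\bullet_{\mathrm{CR}}(\mathcal{X};\mathbb{C})$ denotes Chen–Ruan orbifold cohomology, with Chen–Ruan product $\cup_{\mathrm{CR}}$ and orbifold Poincaré pairing. Let $\Lambda = \mathbb{C}[\![U_1,\ldots,U_s]\!]$ be the Novikov ring of $\mathcal{X}$. For $\mathcal{Z} = \mathcal{X}$ or $Y$, let $\mathcal{H}_\mathcal{Z} = H^\bullet_{\mathrm{CR}}(\mathcal{Z};\Lambda) \otimes \mathbb{C}(\!(z^{-1})\!)$ (with $\deg z = 2$), with symplectic form $\Omega_\mathcal{Z}(f,g) = \operatorname{Res}_{z=0}(f(-z),g(z))_\mathcal{Z}\,dz$, and Lagrangian subspaces $\mathcal{H}_\mathcal{Z}^+ = H^\bullet_{\mathrm{CR}}(\mathcal{Z};\Lambda)\otimes\mathbb{C}[z]$, $\mathcal{H}_\mathcal{Z}^- = z^{-1}H^\bullet_{\mathrm{CR}}(\mathcal{Z};\Lambda)\otimes\mathbb{C}[\![z^{-1}]\!]$; let $\mathcal{L}_\mathcal{Z} \subset \mathcal{H}_\mathcal{Z}$ be Givental's Lagrangian cone encoding genus-zero Gromov–Witten invariants. Assume (the Crepant Resolution Conjecture) that $\mathbb{U}: \mathcal{H}_\mathcal{X} \to \mathcal{H}_Y$ is a degree-preserving $\mathbb{C}(\!(z^{-1})\!)$-linear symplectic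 isomorphism with $\mathbb{U}(\mathcal{L}_\mathcal{X}) = \mathcal{L}_Y$ after analytic continuation, satisfying: (a) $\mathbb{U}(\mathbf{1}_\mathcal{X}) = \mathbf{1}_Y + O(z^{-1})$; (b) $\mathbb{U} \circ (\rho \cup_{\mathrm{CR}}) = (\pi^\star\rho \cup) \circ \mathbb{U}$ for every untwisted degree-two class $\rho \in H^2(\mathcal{X};\mathbb{C})$; (c) $\mathbb{U}(\mathcal{H}_\mathcal{X}^+) \oplus \mathcal{H}_Y^- = \mathcal{H}_Y$; (d) the matrix entries of $\mathbb{U}$ with respect to fixed homogeneous bases lie in $\mathbb{C}(\!(z^{-1})\!)$. *)

(* C is modelled as R[i] = complex R for R : realType. *)
From HB Require Import structures.
From mathcomp Require Import all_boot all_order all_algebra.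
From mathcomp Require Import reals.
From mathcomp Require Export complex.
Set Implicit Arguments. Unset Strict Implicit. Unset Printing Implicit Defensive.
Import Order.TTheory GRing.Theory Num.Theory.
Local Open Scope ring_scope.

(* Finite sum over the integer interval [lo, hi] (empty if hi < lo). *)
Definition isum (V : zmodType) (lo hi : int) (F : int -> V) : V :=
  \sum_(k < `|hi - lo|%N.+1 | lo <= hi) F (lo + (k : nat)%:Z).

(* A formal Laurent series in z^{-1} with coefficients in V (an element of
   V ⊗ C((z^{-1}))): lv s is the coefficient of z^s, and only finitely many
   positive powers of z occur (lv s = 0 for s > lvtop). *)
Record lvec (V : zmodType) := LVec {
  lv : int -> V;
  lvtop : int;
  lvtopP : forall s, lvtop < s -> lv s = 0 }.

Lemma lconst_subproof (V : zmodType) (v : V) :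
  forall s : int, 0 < s -> (fun t : int => if t == 0 then v else 0) s = 0.
Proof. by move=> s hs; rewrite /= gt_eqF. Qed.
Definition lconst (V : zmodType) (v : V) : lvec V :=
  @LVec V (fun t => if t == 0 then v else 0) 0 (@lconst_subproof V v).

(* z-linear extension of a C-linear map given by a matrix A (row-vector convention) *)
Lemma lmapm_subproof (K : fieldType) n k (A : 'M[K]_(n, k)) (f : lvec 'rV[K]_n) :
  forall s, lvtop f < s -> (fun t => lv f t *m A) s = 0.
Proof. by move=> s hs /=; rewrite (lvtopP hs) mul0mx. Qed.
Definition lmapm (K : fieldType) n k (A : 'M[K]_(n, k)) (f : lvec 'rV[K]_n)
  : lvec 'rV[K]_k := @LVec _ (fun t => lv f t *m A) (lvtop f) (@lmapm_subproof K n k A f).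

(* Action of a C((z^{-1}))-linear map with matrix U (entries in C((z^{-1})),
   row-vector convention: basis vector e_i |-> sum_j U_ij f_j) on f.
   (U f)_p = sum_{s + t = p} f_s U_t ; the result has top <= lvtop f + lvtop U. *)
Definition lapply (K : fieldType) n m (U : lvec 'M[K]_(n, m)) (f : lvec 'rV[K]_n)
  : int -> 'rV[K]_m :=
  fun p => isum (p - lvtop U) (lvtop f) (fun s => lv f s *m lv U (p - s)).

Definition pair (K : fieldType) n (eta : 'M[K]_n) (a b : 'rV[K]_n) : K :=
  (a *m eta *m b^T) 0 0.

(* Symplectic form Omega(f,g) = Res_{z=0} (f(-z), g(z)) dz
   = sum_{s + t = -1} (-1)^s (f_s, g_t), for f, g with coefficient functions
   F, G vanishing above tops tf, tg. *)
Definition omega (K : fieldType) n (eta : 'M[K]_n) (F G : int -> 'rV[K]_n)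
  (tf tg : int) : K :=
  isum (-1 - tg) tf (fun s => (-1) ^ s * pair eta (F s) (G (-1 - s))).

(* F : int -> 'rV_n (coefficients of z^s) is homogeneous of degree d,
   where the i-th basis vector has degree deg i and deg z = 2. *)
Definition homog (K : fieldType) n (deg : 'I_n -> nat) (d : int)
  (F : int -> 'rV[K]_n) : Prop :=
  forall s i, F s 0 i != 0 -> (deg i)%:Z + 2 * s = d.

(* F lies in H^- = z^{-1} H ⊗ C[[z^{-1}]] *)
Definition in_minus (K : fieldType) n (F : int -> 'rV[K]_n) : Prop :=
  forall s : int, 0 <= s -> F s = 0.

(* The coefficients of U are recovered by applying it to monomials v z^c: the
   image of v z^c is the series with coefficients v U_(p - c).  Testing on z^(-1)
   times a basis vector shows, since H^- is preserved, that U has no positive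
   powers of z; grading then bounds the negative powers, as U_s can only join
   degrees differing by -2s.  Applying U to constant classes gives (ii) and (iii),
   and the symplectic form evaluated on (a, b z^(-1)) is just the pairing of a
   and b, whose image under U only involves U_0. *)
From HB Require Import structures.
From mathcomp Require Import all_boot all_order all_algebra.
From mathcomp Require Import reals complex.
From mathcomp Require Import zify.
Import Order.TTheory GRing.Theory Num.Theory.
Local Open Scope ring_scope.

Lemma isum_single (V : zmodType) (lo hi c : int) (F : int -> V) :
  (forall s, s != c -> F s = 0) -> (~~ ((lo <= c) && (c <= hi)) -> F c = 0) ->
  isum lo hi F = F c.
Proof.
move=> F0 Fc_out; rewrite /isum.
have [/andP[lo_c c_hi]|c_out] := boolP ((lo <= c) && (c <= hi)); last first.
  rewrite (Fc_out c_out) big1 // => k _.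
  by have [->|] := eqVneq (lo + (k : nat)%:Z) c; [exact: Fc_out | exact: F0].
have lo_hi : lo <= hi by apply: le_trans c_hi.
have ltc : (`|c - lo|%N < `|hi - lo|%N.+1)%N by lia.
rewrite lo_hi (bigD1 (Ordinal ltc)) //= big1 ?addr0; first by congr F; lia.
move=> k nek; apply: F0; apply: contraNneq nek => ek.
by rewrite -val_eqE /=; apply/eqP; lia.
Qed.

Lemma lmono_subproof (V : zmodType) (c : int) (v : V) :
  forall s : int, c < s -> (fun t : int => if t == c then v else 0) s = 0.
Proof. by move=> s hs; rewrite /= gt_eqF. Qed.

Definition lmono (V : zmodType) (c : int) (v : V) : lvec V :=
  @LVec V (fun t => if t == c then v else 0) c (@lmono_subproof V c v).
Arguments lmono {V}.

Lemma lmonoE (V : zmodType) (c t : int) (v : V) :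
  lv (lmono c v) t = if t == c then v else 0.
Proof. by []. Qed.

Lemma pair0l (K : fieldType) n (eta : 'M[K]_n) b : pair eta 0 b = 0.
Proof. by rewrite /pair !mul0mx mxE. Qed.

Lemma pair0r (K : fieldType) n (eta : 'M[K]_n) a : pair eta a 0 = 0.
Proof. by rewrite /pair trmx0 mulmx0 mxE. Qed.

Lemma delta_mulmx (K : fieldType) n m (A : 'M[K]_(n, m)) i j :
  (delta_mx (0 : 'I_1) i *m A) 0 j = A i j.
Proof. by rewrite -rowE mxE. Qed.

Lemma omega_lconst_lmono (K : fieldType) n (eta : 'M[K]_n) (a b : 'rV[K]_n) :
  omega eta (lv (lconst a)) (lv (lmono (-1) b)) 0 (-1) = pair eta a b.
Proof.
rewrite /omega (@isum_single _ _ _ 0) //=; first by rewrite expr0z mul1r.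
by move=> s /negbTE ->; rewrite pair0l mulr0.
Qed.

Section LaurentMatrix.
Variables (K : fieldType) (n m : nat) (U : lvec 'M[K]_(n, m)).

Lemma lapply_single (f : lvec 'rV[K]_n) (c : int) :
  (forall t, t != c -> lv f t = 0) -> forall p, lapply U f p = lv f c *m lv U (p - c).
Proof.
move=> f0 p; apply: (@isum_single _ _ _ c) => [s /f0 ->|]; first by rewrite mul0mx.
rewrite negb_and -!ltNge => /orP[lt_c|lt_c]; last by rewrite (lvtopP lt_c) mul0mx.
by rewrite (@lvtopP _ U) ?mulmx0 //; move: lt_c; rewrite !ltrBrDl addrC.
Qed.

Lemma lapply_lmono (c p : int) (v : 'rV[K]_n) :
  lapply U (lmono c v) p = v *m lv U (p - c).
Proof. by rewrite (@lapply_single _ c) ?lmonoE ?eqxx // => t /negbTE ne; rewrite lmonoE ne. Qed.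

Lemma lapply_lconst (p : int) (v : 'rV[K]_n) : lapply U (lconst v) p = v *m lv U p.
Proof.
by rewrite (@lapply_single _ 0) /= ?eqxx ?subr0 // => t /negbTE /= ->.
Qed.

Lemma lapply_lmapm (A : 'M[K]_n) (p : int) (v : 'rV[K]_n) :
  lapply U (lmapm A (lconst v)) p = v *m A *m lv U p.
Proof.
by rewrite (@lapply_single _ 0) /= ?eqxx ?subr0 // => t /negbTE /= ->; rewrite mul0mx.
Qed.

Lemma lv_degree_shift (degX : 'I_n -> nat) (degY : 'I_m -> nat) :
    (forall d (f : lvec 'rV[K]_n), homog degX d (lv f) -> homog degY d (lapply U f)) ->
  forall s i j, lv U s i j != 0 -> (degY j)%:Z + 2 * s = (degX i)%:Z.
Proof.
move=> Udeg s i j Usij; set e_i := delta_mx (0 : 'I_1) i : 'rV[K]_n.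
have homog_e_i : homog degX (degX i)%:Z (lv (lmono 0 e_i)).
  move=> t i'; rewrite lmonoE; have [->|] := eqVneq t 0; last by rewrite mxE eqxx.
  by rewrite mxE; have [->|] := eqVneq i' i; rewrite ?mulr0 ?addr0 // andbF eqxx.
by apply: (Udeg _ _ homog_e_i s j); rewrite lapply_lmono subr0 delta_mulmx.
Qed.

Lemma lv_eq0_below (degX : 'I_n -> nat) (degY : 'I_m -> nat) :
    (forall d (f : lvec 'rV[K]_n), homog degX d (lv f) -> homog degY d (lapply U f)) ->
  forall s : int, s < - (\max_(j < m) degY j)%:Z -> lv U s = 0.
Proof.
move=> Udeg s s_lt; apply/matrixP => i j; rewrite mxE; apply/eqP.
apply: contraLR s_lt => /(lv_degree_shift _ _ Udeg) deg_ij; rewrite -leNgt.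
have : (degY j <= \max_(j < m) degY j)%N by apply: leq_bigmax.
lia.
Qed.

Lemma lv_eq0_gt0 :
    (forall f : lvec 'rV[K]_n, in_minus (lv f) -> in_minus (lapply U f)) ->
  forall s, 0 < s -> lv U s = 0.
Proof.
move=> Uminus s s_gt0; apply/matrixP => i j; rewrite mxE.
set e_i := delta_mx (0 : 'I_1) i : 'rV[K]_n.
have minus_e_i : in_minus (lv (lmono (-1) e_i)).
  by move=> t t_ge0; rewrite lmonoE ifF //; apply/eqP; lia.
have : lapply U (lmono (-1) e_i) (s - 1) = 0 by apply: Uminus => //; lia.
rewrite lapply_lmono (_ : s - 1 - -1 = s); last by lia.
by move/matrixP/(_ 0 j); rewrite delta_mulmx mxE.
Qed.

Lemma omega_lapply_lconst_lmono (eta : 'M[K]_m) (a b : 'rV[K]_n) :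
    (forall s, 0 < s -> lv U s = 0) ->
  omega eta (lapply U (lconst a)) (lapply U (lmono (-1) b))
    (0 + lvtop U) (-1 + lvtop U) = pair eta (a *m lv U 0) (b *m lv U 0).
Proof.
move=> Upos; rewrite /omega (@isum_single _ _ _ 0).
- by rewrite expr0z mul1r lapply_lconst lapply_lmono !subr0 subrr.
- move=> s ns0; rewrite lapply_lconst lapply_lmono.
  have -> : -1 - s - -1 = - s by lia.
  have [s_gt0|s_le0] := ltP 0 s; first by rewrite Upos // mulmx0 pair0l mulr0.
  by rewrite (Upos (- s)) ?mulmx0 ?pair0r ?mulr0 //; lia.
- move=> out0; rewrite lapply_lconst (@lvtopP _ U 0) ?mulmx0 ?pair0l ?mulr0 //.
  by rewrite ltNge; apply: contra out0 => top_ge0; apply/andP; split; lia.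
Qed.

End LaurentMatrix.

Arguments lv_degree_shift {K n m U degX degY}.
Arguments lv_eq0_below {K n m U degX degY}.
Arguments lv_eq0_gt0 {K n m U}.

Theorem lemma5p2 (R : realType)
  (n m : nat) (degX : 'I_n -> nat) (degY : 'I_m -> nat)
  (oneX : 'rV[R[i]]_n) (oneY : 'rV[R[i]]_m)
  (etaX : 'M[R[i]]_n) (etaY : 'M[R[i]]_m)
  (r : nat) (incX : 'M[R[i]]_(r, n)) (piS : 'M[R[i]]_(r, m))
  (cupX : 'rV[R[i]]_r -> 'M[R[i]]_n) (cupY : 'rV[R[i]]_m -> 'M[R[i]]_m)
  (hcupX1 : forall rho, oneX *m cupX rho = rho *m incX)
  (hcupY1 : forall c, oneY *m cupY c = c)
  (U : lvec 'M[R[i]]_(n, m))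
  (Udeg : forall (d : int) (f : lvec 'rV[R[i]]_n),
      homog degX d (lv f) -> homog degY d (lapply U f))
  (Usymp : forall f g : lvec 'rV[R[i]]_n,
      omega etaY (lapply U f) (lapply U g) (lvtop f + lvtop U) (lvtop g + lvtop U)
      = omega etaX (lv f) (lv g) (lvtop f) (lvtop g))
  (Ua : lapply U (lconst oneX) 0 = oneY /\
        forall s : int, 0 < s -> lapply U (lconst oneX) s = 0)
  (Ub : forall (rho : 'rV[R[i]]_r) (f : lvec 'rV[R[i]]_n) (p : int),
      lapply U (lmapm (cupX rho) f) p = lapply U f p *m cupY (rho *m piS))
  (Uminus : forall f : lvec 'rV[R[i]]_n, in_minus (lv f) -> in_minus (lapply U f)) :
  (exists k : nat, forall s : int,
      ((0 < s) -> lv U s = 0) /\ ((s < - (k%:Z)) -> lv U s = 0)) /\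
  (forall i j, lv U 0 i j != 0 -> degX i = degY j) /\
  oneX *m lv U 0 = oneY /\
  (forall rho : 'rV[R[i]]_r, (rho *m incX) *m lv U 0 = rho *m piS) /\
  (forall a b : 'rV[R[i]]_n, pair etaY (a *m lv U 0) (b *m lv U 0) = pair etaX a b).
Proof.
have Upos := lv_eq0_gt0 Uminus; have Ugrading := lv_degree_shift Udeg.
have oneU : oneX *m lv U 0 = oneY by rewrite -lapply_lconst Ua.1.
split.
  by exists (\max_(j < m) degY j) => s; split; [exact: Upos | exact: lv_eq0_below Udeg s].
split; first by move=> i j /Ugrading; rewrite mulr0 addr0 => /eqP; rewrite eqz_nat => /eqP.
split; first exact: oneU.
split; first by move=> rho; rewrite -hcupX1 -lapply_lmapm Ub lapply_lconst oneU hcupY1.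
move=> a b; rewrite -omega_lapply_lconst_lmono //.
by rewrite -[pair etaX a b]omega_lconst_lmono -Usymp.
Qed.
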